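(* Let $p$ be a prime and $G$ an extraspecial $p$-group. Then the only subsets of $G$ of the form $w(G)$ with $d\ge1$ and $w\in F_d$ are $\{1\}$, $Z(G)$ and $G$.
   Context: A special $p$-group is a finite $p$-group whose center, derived subgroup and Frattini subgroup coincide and are elementary abelian; it is extraspecial if $|Z(G)|=p$. $F_d$ is the free group on $d$ letters and $w(G)$ is the image of the word map $G^d\to G$ given by evaluating $w$. *)

From mathcomp Require Import all_boot all_fingroup all_solvable.
Set Implicit Arguments. Unset Strict Implicit. Unset Printing Implicit Defensive.
Local Open Scope group_scope.

(* Words in d letters: terms of the free group F_d (every element of F_d is
   represented by such a term, and evaluation factors through F_d). *)
Inductive word (d : nat) : Type :=
  | WVar of 'I_d
  | WOne
  | WMul of word d & word d
  | WInv of word d.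

Fixpoint eval_word (gT : finGroupType) d (x : 'I_d -> gT) (w : word d) : gT :=
  match w with
  | WVar i => x i
  | WOne => 1
  | WMul u v => eval_word x u * eval_word x v
  | WInv u => (eval_word x u)^-1
  end.

Definition word_image (gT : finGroupType) d (w : word d) (G : {set gT}) : {set gT} :=
  [set x | [exists f : {ffun 'I_d -> gT}, [forall i, f i \in G] && (eval_word f w == x)]].

From mathcomp Require Import all_boot all_fingroup all_solvable.
Set Implicit Arguments. Unset Strict Implicit. Unset Printing Implicit Defensive.
Local Open Scope group_scope.

(* Put all variables but one equal to 1: the word becomes a power of the
   remaining one, the exponent being the exponent sum of that variable.  If it
   is prime to p, this power map is onto, so w(G) = G.  Otherwise all exponent
   sums are multiples of p, and since G/Z(G) is elementary abelian w(G) lies in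
   Z(G).  Because commutators are central, moving one variable along a cyclic
   subgroup moves the value of w along a coset of a cyclic subgroup of Z(G);
   as |Z(G)| = p, either w is constant (w(G) = 1) or one such move is
   nontrivial and sweeps out all of Z(G). *)

Section WordMap.

Variables (gT : finGroupType) (d : nat).
Implicit Types (G : {group gT}) (w : word d) (h : {ffun 'I_d -> gT}).

Lemma eq_eval_word (h1 h2 : 'I_d -> gT) w :
  h1 =1 h2 -> eval_word h1 w = eval_word h2 w.
Proof. by move=> eq_h; elim: w => /= [j|| u -> v -> | u ->]. Qed.

Lemma eval_word1 w : eval_word (fun=> 1 : gT) w = 1.
Proof. by elim: w => /= [j|| u -> v -> | u ->]; rewrite ?mulg1 ?invg1. Qed.

Lemma eval_word_ffun1 w : eval_word [ffun=> 1 : gT] w = 1.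
Proof. by rewrite (@eq_eval_word _ (fun=> 1)) ?eval_word1 // => j; rewrite ffunE. Qed.

Lemma mem_eval_word G (h : 'I_d -> gT) w :
  (forall j, h j \in G) -> eval_word h w \in G.
Proof.
by move=> hG; elim: w => /= [j|| u IHu v IHv | u IHu]; rewrite ?group1 ?groupM ?groupV //.
Qed.

Lemma word_imageP G w x :
  reflect (exists2 h : {ffun 'I_d -> gT}, (forall j, h j \in G) & eval_word h w = x)
          (x \in word_image w G).
Proof.
rewrite inE; apply: (iffP existsP) => [[h /andP[/forallP hG /eqP]] | [h hG <-]].
  by exists h.
by exists h; rewrite eqxx andbT; apply/forallP.
Qed.

Lemma mem_word_image G w h :
  (forall j, h j \in G) -> eval_word h w \in word_image w G.
Proof. by move=> hG; apply/word_imageP; exists h. Qed.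

Lemma word_image_subG G w : word_image w G \subset G.
Proof. by apply/subsetP => _ /word_imageP[h hG <-]; apply: mem_eval_word. Qed.

Lemma word_image1 G w : 1 \in word_image w G.
Proof.
by rewrite -(eval_word_ffun1 w) mem_word_image // => j; rewrite ffunE group1.
Qed.

Definition upd h (i : 'I_d) (a : gT) := [ffun j => if j == i then a else h j].

Lemma upd_id h i : upd h i (h i) = h.
Proof. by apply/ffunP => j; rewrite ffunE; case: eqP => // ->. Qed.

Lemma upd_in G h i a :
  (forall j, h j \in G) -> a \in G -> forall j, upd h i a j \in G.
Proof. by move=> hG aG j; rewrite ffunE; case: (j == i). Qed.

Lemma ffun_support_ind (P : {ffun 'I_d -> gT} -> Prop) :
  P [ffun=> 1] -> (forall h i, P (upd h i 1) -> P h) -> forall h, P h.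
Proof.
move=> P1 P_upd h.
elim: {h}#|[set j | h j != 1]| {-2}h (leqnn #|[set j | h j != 1]|) => [|n IHn] h.
  rewrite leqn0 cards_eq0 => /eqP supp0.
  suff -> : h = [ffun=> 1] by [].
  apply/ffunP => j; rewrite ffunE; apply/eqP/negbFE.
  by have := in_set0 j; rewrite -supp0 inE.
case: (pickP [pred j | h j != 1]) => [i /= hi | h1] le_supp.
  apply: (P_upd h i); apply: IHn.
  have -> : [set j | upd h i 1 j != 1] = [set j | h j != 1] :\ i.
    by apply/setP => j; rewrite !inE ffunE; case: (eqVneq j i) => [->|]; rewrite ?eqxx.
  by rewrite (cardsD1 i) inE hi in le_supp.
apply: IHn; suff -> : [set j | h j != 1] = set0 by rewrite cards0.
by apply/setP => j; rewrite !inE; apply: h1.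
Qed.

Lemma exists_coord_change G w h :
  (forall j, h j \in G) -> eval_word h w != 1 ->
  exists h' i, [/\ forall j, h' j \in G & eval_word h' w != eval_word (upd h' i 1) w].
Proof.
move: h; apply: ffun_support_ind => [_ | h i IH hG wh1].
  by rewrite eval_word_ffun1 eqxx.
case: (eqVneq (eval_word h w) (eval_word (upd h i 1) w)) => [eq_w | ne_w].
  by apply: IH; rewrite -?eq_w //; apply: upd_in.
by exists h, i.
Qed.

End WordMap.

(* The exponent sum of the variable i in w, as a natural number modulo M;
   for an inverse, M - (e %% M) represents -e. *)
Fixpoint exp_sum (M d : nat) (i : 'I_d) (w : word d) : nat :=
  match w with
  | WVar j => (j == i)%N
  | WOne => 0
  | WMul u v => exp_sum M i u + exp_sum M i v
  | WInv u => M - exp_sum M i u %% M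
  end.

Section SingleVariable.

Variables (gT : finGroupType) (G : {group gT}) (d : nat).

Lemma expg_exp_sumV (i : 'I_d) u a :
  a \in G -> a ^+ exp_sum #|G| i (WInv u) = (a ^+ exp_sum #|G| i u)^-1.
Proof.
move=> aG /=; apply/eqP; rewrite eq_sym eq_invg_mul.
rewrite -[a ^+ exp_sum _ _ u](expg_mod _ (expg_cardG aG)) -expgD.
by rewrite subnKC ?expg_cardG // ltnW // ltn_mod cardG_gt0.
Qed.

Lemma eval_word_single (i : 'I_d) a w :
  a \in G -> eval_word (upd [ffun=> 1] i a) w = a ^+ exp_sum #|G| i w.
Proof.
move=> aG; elim: w => [j|| u IHu v IHv | u IHu] /=.
- by rewrite !ffunE; case: (j == i).
- by [].
- by rewrite IHu IHv expgD.
- by rewrite (expg_exp_sumV _ _ aG) IHu.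
Qed.

Lemma word_image_coprime (i : 'I_d) w :
  coprime #|G| (exp_sum #|G| i w) -> word_image w G = G.
Proof.
move=> coGe; apply/eqP; rewrite eqEsubset word_image_subG.
apply/subsetP => g gG; rewrite -[g](expgK coGe gG) -expgAC -eval_word_single ?groupX //.
by apply: mem_word_image; apply: upd_in; rewrite ?groupX // => j; rewrite ffunE group1.
Qed.

End SingleVariable.

Section ClassTwo.

Variables (gT : finGroupType) (G : {group gT}).
Hypothesis der1_center : [~: G, G] \subset 'Z(G).

Let centerG : {subset 'Z(G) <= G}.
Proof. exact/subsetP/center_sub. Qed.

Let center_commute z x : z \in 'Z(G) -> x \in G -> commute x z.
Proof. by move=> zZ xG; apply: (centerC xG zZ). Qed.

Let center_commuteX k z x : z \in 'Z(G) -> x \in G -> commute x (z ^+ k).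
Proof. by move=> zZ; apply: center_commute; rewrite groupX. Qed.

Let commg_center x y : x \in G -> y \in G -> [~ x, y] \in 'Z(G).
Proof. by move=> xG yG; apply: (subsetP der1_center); apply: mem_commg. Qed.

Lemma commgX_center x y k :
  x \in G -> y \in G -> [~ x ^+ k, y] = [~ x, y] ^+ k.
Proof. by move=> xG yG; apply/commXg/center_commute; rewrite ?commg_center. Qed.

Lemma center_line_mul Qu Qv bu bv cu cv :
    Qu \in G -> Qv \in G -> bu \in G -> bv \in G -> commute bu bv ->
    cu \in 'Z(G) -> cv \in 'Z(G) ->
  exists2 c, c \in 'Z(G) & forall k,
    Qu * bu ^+ k * cu ^+ k * (Qv * bv ^+ k * cv ^+ k)
      = Qu * Qv * (bu * bv) ^+ k * c ^+ k.
Proof.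
move=> QuG QvG buG bvG cbuv cuZ cvZ; set r := [~ bu, Qv].
have rZ : r \in 'Z(G) by apply: commg_center.
have/centerG rG := rZ; have/centerG cuG := cuZ; have/centerG cvG := cvZ.
exists (r * cu * cv) => [|k]; first by rewrite groupM // groupM.
rewrite (expgMn _ cbuv) (expgMn _ (center_commute cvZ (groupM rG cuG))).
rewrite (expgMn _ (center_commute cuZ rG)).
have E1 : cu ^+ k * (Qv * bv ^+ k * cv ^+ k) = Qv * bv ^+ k * cv ^+ k * cu ^+ k.
  by rewrite (center_commuteX k cuZ) // !groupM ?groupX.
have E2 : bu ^+ k * Qv = Qv * bu ^+ k * r ^+ k by rewrite commgC commgX_center.
have E3 : r ^+ k * bv ^+ k = bv ^+ k * r ^+ k.
  by rewrite (center_commuteX k rZ) ?groupX.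
have E4 : cv ^+ k * cu ^+ k = cu ^+ k * cv ^+ k.
  by rewrite (center_commuteX k cuZ) ?groupX.
rewrite -(mulgA _ (cu ^+ k)) E1 !mulgA -(mulgA Qu) E2 !mulgA.
by rewrite -(mulgA _ (r ^+ k)) E3 !mulgA -(mulgA _ (cv ^+ k)) E4 !mulgA.
Qed.

Lemma center_line_inv Q b c :
    Q \in G -> b \in G -> c \in 'Z(G) ->
  exists2 c', c' \in 'Z(G) & forall k,
    (Q * b ^+ k * c ^+ k)^-1 = Q^-1 * b^-1 ^+ k * c' ^+ k.
Proof.
move=> QG bG cZ; set r := [~ b^-1, Q^-1].
have rZ : r \in 'Z(G) by rewrite commg_center ?groupV.
have/centerG rG := rZ; have ciZ : c^-1 \in 'Z(G) by rewrite groupV.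
exists (r * c^-1) => [|k]; first by rewrite groupM.
rewrite (expgMn _ (center_commute ciZ rG)) !invMg -!expgVn.
have E1 : c^-1 ^+ k * (b^-1 ^+ k * Q^-1) = b^-1 ^+ k * Q^-1 * c^-1 ^+ k.
  by rewrite (center_commuteX k ciZ) // groupM ?groupX ?groupV.
have E2 : b^-1 ^+ k * Q^-1 = Q^-1 * b^-1 ^+ k * r ^+ k.
  by rewrite commgC commgX_center ?groupV.
by rewrite E1 E2 !mulgA.
Qed.

Lemma eval_word_upd_expg d (w : word d) (h : {ffun 'I_d -> gT}) i a :
    (forall j, h j \in G) -> a \in G ->
  exists2 c, c \in 'Z(G) & forall k,
    eval_word (upd h i (a ^+ k)) w
      = eval_word (upd h i 1) w * (a ^+ exp_sum #|G| i w) ^+ k * c ^+ k.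
Proof.
move=> hG aG; have QG u : eval_word (upd h i 1) u \in G.
  by apply: mem_eval_word; apply: upd_in.
elim: w => [j|| u [cu cuZ Eu] v [cv cvZ Ev] | u [c cZ Eu]].
- exists 1 => [|k]; rewrite ?group1 //= !ffunE expg1n mulg1.
  by case: (j == i); rewrite /= ?expg1 ?expg0 ?expg1n ?mul1g ?mulg1.
- by exists 1 => [|k]; rewrite ?group1 //= expg0 !expg1n !mulg1.
- have [c cZ E] := center_line_mul (QG u) (QG v)
    (groupX (exp_sum #|G| i u) aG) (groupX (exp_sum #|G| i v) aG)
    (commuteX2 _ _ (commute_refl a)) cuZ cvZ.
  by exists c => // k; rewrite /= Eu Ev E -expgD.
- have [c' c'Z E] := center_line_inv (QG u) (groupX (exp_sum #|G| i u) aG) cZ.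
  by exists c' => // k; rewrite (expg_exp_sumV _ _ aG) /= Eu E.
Qed.

Lemma word_image_sub_center d (w : word d) :
    (forall i a, a \in G -> a ^+ exp_sum #|G| i w \in 'Z(G)) ->
  word_image w G \subset 'Z(G).
Proof.
move=> eZ; apply/subsetP => _ /word_imageP[h hG <-]; move: h hG.
apply: ffun_support_ind => [_ | h i IH hG]; first by rewrite eval_word_ffun1 group1.
have [c cZ /(_ 1%N)] := eval_word_upd_expg w i hG (hG i).
rewrite !expg1 upd_id => ->.
by rewrite !groupM ?eZ //; apply/IH/upd_in.
Qed.

Lemma center_sub_word_image d (w : word d) (h : {ffun 'I_d -> gT}) i :
    prime #|'Z(G)| -> word_image w G \subset 'Z(G) -> (forall j, h j \in G) ->
    eval_word h w != eval_word (upd h i 1) w ->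
  'Z(G) \subset word_image w G.
Proof.
move=> prZ sWZ hG w_ne; have [c cZ E] := eval_word_upd_expg w i hG (hG i).
set Q := eval_word (upd h i 1) w in E w_ne.
set b := h i ^+ exp_sum #|G| i w in E.
have wZ (f : {ffun 'I_d -> gT}) : (forall j, f j \in G) -> eval_word f w \in 'Z(G).
  by move=> fG; apply: (subsetP sWZ); apply: mem_word_image.
have QZ : Q \in 'Z(G) by apply/wZ/upd_in.
have Eh : eval_word h w = Q * (b * c).
  by have := E 1%N; rewrite !expg1 upd_id -mulgA.
have bcZ : b * c \in 'Z(G) by rewrite -(mulKg Q (b * c)) -Eh groupM ?groupV // wZ.
have bc1 : b * c != 1 by apply: contra w_ne => /eqP bc1; rewrite Eh bc1 mulg1.
have Zbc : <[b * c]> = 'Z(G).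
  have sZ : <[b * c]> \subset 'Z(G) by rewrite cycle_subG.
  apply/eqP; rewrite eqEcard sZ (prime_nt_dvdP prZ _ (cardSg sZ)) ?leqnn //.
  by rewrite -trivg_card1 cycle_eq1.
apply/subsetP => z zZ.
have /cycleP[k Ek] : Q^-1 * z \in <[b * c]> by rewrite Zbc groupM ?groupV.
rewrite -(mulKVg Q z) Ek expgMn; last exact/center_commute/groupX/hG.
by rewrite mulgA -E; apply/mem_word_image/upd_in; rewrite ?groupX.
Qed.

End ClassTwo.

Lemma expg_Phi (gT : finGroupType) (G : {group gT}) (p : nat) a :
  p.-group G -> a \in G -> a ^+ p \in 'Phi(G).
Proof.
move=> pG aG; rewrite (Phi_joing pG) -[p]expn1.
exact/(subsetP (joing_subr _ _))/Mho_p_elt/(mem_p_elt pG).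
Qed.

Theorem theorem4p9 (gT : finGroupType) (G : {group gT}) (p : nat) :
  prime p -> p.-group G -> extraspecial G ->
  forall (d : nat) (w : word d), 1 <= d ->
    word_image w G = [1 gT] \/ word_image w G = 'Z(G) \/ word_image w G = G.
Proof.
(* For d = 0 the word map is constant. *)
move=> p_pr pG [[PhiZ derZ] prZ] d w _.
have der1Z : [~: G, G] \subset 'Z(G) by rewrite -derZ derg1.
have [/existsP[i e_ndvd] | /existsPn e_dvd] := boolP [exists i, ~~ (p %| exp_sum #|G| i w)].
  right; right; apply: (word_image_coprime (i := i)).
  by rewrite {1}(card_pgroup pG) coprimeXl // prime_coprime.
have sWZ : word_image w G \subset 'Z(G).
  apply: word_image_sub_center => // i a aG.
  have /dvdnP[q ->] := negbNE (e_dvd i).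
  by rewrite mulnC expgM; apply: groupX; have := expg_Phi pG aG; rewrite PhiZ.
have [sW1 | /subsetPn[_ /word_imageP[h hG <-] wh1]] := boolP (word_image w G \subset [1]).
  by left; apply/eqP; rewrite eqEsubset sW1 sub1set word_image1.
move: wh1; rewrite inE => /(exists_coord_change hG)[h' [i [h'G w_ne]]].
by right; left; apply/eqP; rewrite eqEsubset sWZ (center_sub_word_image _ _ sWZ h'G w_ne).
Qed.
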